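(* Let $w_0,w_1,p,q$ be integers with $p\equiv 2\pmod 4$, $q\equiv 3\pmod 4$ and $w_0+w_1$ odd, and let $(w_n)_{n\ge0}$ be defined by $w_{n+2}=pw_{n+1}+qw_n$ for all $n\ge0$. Then for all integers $n\ge0$ and $k\ge1$, $$w_{n+2^k}\equiv w_n+2^k\pmod{2^{k+1}}.$$ *)

From Stdlib Require Import ZArith.

From Stdlib Require Import ZArith Lia.
Open Scope Z_scope.

(* Induction on k, with the stronger claim that w(n + 2^k) - w(n) is 2^k times
   an odd number.  The sequence E(n) = (w(n + 2^k) - w(n)) / 2^k satisfies the
   same recurrence and is odd everywhere, and for such a sequence
   w(n + 2) - w(n) = p w(n+1) + (q - 1) w(n) is 2 + 2 = 0 mod 4; hence
   E(n + 2^k) = E(n) mod 4, and w(n + 2^(k+1)) - w(n) = 2^k (E(n + 2^k) + E(n))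
   is 2^(k+1) times the odd number E(n) + 2t.  The case k = 1 uses that
   w(n) + w(n+1) stays odd, since p is even and q odd. *)

Section LinearRecurrence.

Variables p q : Z.

Definition linrec (w : nat -> Z) : Prop :=
  forall n : nat, w (n + 2)%nat = p * w (n + 1)%nat + q * w n.

Lemma linrec_shift (w : nat -> Z) (m : nat) :
  linrec w -> linrec (fun n => w (n + m)%nat).
Proof.
  intros hw n; cbv beta.
  replace (n + 2 + m)%nat with (n + m + 2)%nat by lia.
  replace (n + 1 + m)%nat with (n + m + 1)%nat by lia.
  apply hw.
Qed.

Lemma linrec_sub (u v : nat -> Z) :
  linrec u -> linrec v -> linrec (fun n => u n - v n).
Proof. intros hu hv n; cbv beta; rewrite hu, hv; ring. Qed.

Lemma linrec_div (c : Z) (u : nat -> Z) :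
  c <> 0 -> (forall n, (c | u n)) -> linrec u -> linrec (fun n => u n / c).
Proof.
  intros hc hdiv hu n; cbv beta.
  assert (hexact : forall m, c * (u m / c) = u m).
  { intro m; destruct (hdiv m) as [z ->]; rewrite Z.div_mul by exact hc; ring. }
  apply (Z.mul_reg_l _ _ c hc).
  transitivity (p * (c * (u (n + 1)%nat / c)) + q * (c * (u n / c))); [|ring].
  rewrite !hexact; apply hu.
Qed.

Lemma linrec_adjacent_sum_odd (w : nat -> Z) :
  Z.Even p -> Z.Odd q -> linrec w -> Z.Odd (w 0%nat + w 1%nat) ->
  forall n, Z.Odd (w n + w (S n)).
Proof.
  intros [a hpa] [b hqb] hw h0 n.
  induction n as [|n [t IH]]; [exact h0|].
  exists (t + a * w (S n) + b * w n).
  replace (S (S n)) with (n + 2)%nat by lia.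
  rewrite hw; replace (n + 1)%nat with (S n) by lia.
  rewrite hpa, hqb; lia.
Qed.

Hypothesis hp : p mod 4 = 2.
Hypothesis hq : q mod 4 = 3.

Lemma linrec_diff2 (w : nat -> Z) (n : nat) :
  linrec w -> Z.Odd (w n + w (S n)) ->
  exists e, Z.Odd e /\ w (n + 2)%nat - w n = 2 * e.
Proof.
  intros hw [t ht].
  exists (w n + w (S n) + 2 * ((p / 4) * w (S n) + (q / 4) * w n)); split.
  - exists (t + (p / 4) * w (S n) + (q / 4) * w n); lia.
  - rewrite hw; replace (n + 1)%nat with (S n) by lia.
    rewrite (Z.div_mod p 4), (Z.div_mod q 4) at 1 by lia.
    rewrite hp, hq; ring.
Qed.

Lemma linrec_odd_diff_even_mod4 (w : nat -> Z) :
  linrec w -> (forall n, Z.Odd (w n)) ->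
  forall m n, (4 | w (n + 2 * m)%nat - w n).
Proof.
  intros hw hodd.
  assert (hstep : forall n, (4 | w (n + 2)%nat - w n)).
  { intro n; destruct (hodd n) as [d hd]; destruct (hodd (n + 1)%nat) as [c hc].
    exists (2 * (p / 4) * c + (p / 4) + c + 2 * (q / 4) * d + (q / 4) + d + 1).
    rewrite hw, hc, hd.
    rewrite (Z.div_mod p 4), (Z.div_mod q 4) at 1 by lia.
    rewrite hp, hq; ring. }
  induction m as [|m IH]; intro n.
  - replace (n + 2 * 0)%nat with n by lia; rewrite Z.sub_diag; apply Z.divide_0_r.
  - replace (n + 2 * S m)%nat with (n + 2 * m + 2)%nat by lia.
    replace (w (n + 2 * m + 2)%nat - w n)
      with ((w (n + 2 * m + 2)%nat - w (n + 2 * m)%nat) + (w (n + 2 * m)%nat - w n))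
      by ring.
    apply Z.divide_add_r; [apply hstep | apply IH].
Qed.

Lemma linrec_diff_pow2 (w : nat -> Z) :
  linrec w -> (forall n, Z.Odd (w n + w (S n))) ->
  forall k : nat, (1 <= k)%nat ->
  forall n, exists e, Z.Odd e /\ w (n + 2 ^ k)%nat - w n = 2 ^ Z.of_nat k * e.
Proof.
  intros hw hadj k hk.
  induction k as [|k IH]; [lia|].
  destruct (Nat.eq_dec k 0) as [-> | hk0]; intro n.
  { exact (linrec_diff2 w n hw (hadj n)). }
  specialize (IH ltac:(lia)).
  set (c := 2 ^ Z.of_nat k).
  assert (hc : c <> 0) by (apply Z.pow_nonzero; lia).
  set (E := fun n => (w (n + 2 ^ k)%nat - w n) / c).
  assert (hE : forall m, Z.Odd (E m) /\ w (m + 2 ^ k)%nat - w m = c * E m).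
  { intro m; destruct (IH m) as [e [he hd]]; unfold E; fold c in hd.
    rewrite hd, Z.mul_comm, Z.div_mul by exact hc; split; [exact he | ring]. }
  assert (hrecE : linrec E).
  { apply linrec_div; [exact hc | | exact (linrec_sub _ _ (linrec_shift w _ hw) hw)].
    intro m; exists (E m); rewrite (proj2 (hE m)); ring. }
  destruct (linrec_odd_diff_even_mod4 E hrecE (fun m => proj1 (hE m)) (2 ^ (k - 1)) n)
    as [t ht].
  replace (n + 2 * 2 ^ (k - 1))%nat with (n + 2 ^ k)%nat in ht
    by (rewrite <- Nat.pow_succ_r'; f_equal; f_equal; lia).
  destruct (hE n) as [[e he] hdn].
  exists (E n + 2 * t); split; [exists (e + t); lia|].
  replace (n + 2 ^ S k)%nat with (n + 2 ^ k + 2 ^ k)%nat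
    by (rewrite Nat.pow_succ_r'; lia).
  rewrite Nat2Z.inj_succ, Z.pow_succ_r by lia; fold c.
  replace (w (n + 2 ^ k + 2 ^ k)%nat - w n)
    with ((w (n + 2 ^ k + 2 ^ k)%nat - w (n + 2 ^ k)%nat) + (w (n + 2 ^ k)%nat - w n))
    by ring.
  rewrite (proj2 (hE (n + 2 ^ k)%nat)), hdn.
  replace (E (n + 2 ^ k)%nat) with (E n + t * 4) by lia; ring.
Qed.

End LinearRecurrence.

Theorem mainTheorem9 (p q : Z) (w : nat -> Z)
  (hp : p mod 4 = 2) (hq : q mod 4 = 3)
  (hw : Z.odd (w 0%nat + w 1%nat) = true)
  (hrec : forall n : nat, w (n + 2)%nat = p * w (n + 1)%nat + q * w n) :
  forall (n k : nat), (1 <= k)%nat ->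
    (w (n + 2 ^ k)%nat - (w n + 2 ^ Z.of_nat k)) mod (2 ^ (Z.of_nat k + 1)) = 0.
Proof.
  intros n k hk.
  assert (hadj : forall m, Z.Odd (w m + w (S m))).
  { pose proof (Z.div_mod p 4 ltac:(lia)); pose proof (Z.div_mod q 4 ltac:(lia)).
    apply (linrec_adjacent_sum_odd p q w); try assumption.
    - exists (2 * (p / 4) + 1); lia.
    - exists (2 * (q / 4) + 1); lia.
    - apply Z.odd_spec, hw. }
  destruct (linrec_diff_pow2 p q hp hq w hrec hadj k hk n) as [e [[s ->] hd]].
  replace (w (n + 2 ^ k)%nat - (w n + 2 ^ Z.of_nat k)) with (s * 2 ^ (Z.of_nat k + 1))
    by (rewrite Z.pow_add_r by lia; lia).
  apply Z.mod_mul, Z.pow_nonzero; lia.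
Qed.
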